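(* Let $G$ be a graph, $b\ge 0$ an integer and $\beta:E(G)\to\{0,1,2,3\}$, and let $v\in V(G)$ be a vertex of degree one. Then $G-\{v\}$ admits a $b$-bend $\beta$-restricted RAC drawing (with $\beta$ restricted to $E(G-\{v\})$) if and only if $G$ admits a $b$-bend $\beta$-restricted RAC drawing.
   Context: All graphs are simple and undirected. A drawing of a graph $G=(V,E)$ maps vertices injectively to points of $\mathbb{R}^2$ and each edge $uv$ to a simple curve joining the images of $u$ and $v$, such that no vertex image lies in the relative interior of the image of an edge not incident to it. A polyline drawing is a drawing in which each edge is drawn as a union of closed straight-line segments $\lambda_1,\dots,\lambda_t$, where consecutive segments share exactly one endpoint and form an angle different from $180^\circ$, and non-consecutive segments are disjoint; the shared points of consecutive segments are the bends of the edge. A crossing of two edges is a common point of the relative interiors of their drawings; drawings have finitely many crossings. Two edges have a right-angle crossing if the crossing lies in the relative interiors of the respective segments and these segments are orthogonal. Given $b\in\mathbb{N}$ and $\beta:E\to\{0,1,2,3\}$, a $b$-bend $\beta$-restricted RAC drawing of $G$ is a polyline drawing in which every crossing is a right-angle crossing, the total number of bends is at most $b$, and each edge $e$ has at most $\beta(e)$ bends. *)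

From Stdlib Require Import Reals List.
From mathcomp Require Import all_boot.

Set Implicit Arguments.
Unset Strict Implicit.
Unset Printing Implicit Defensive.

Definition point : Type := (R * R)%type.

Definition in_cseg (p q x : point) : Prop :=
  exists t : R, Rle R0 t /\ Rle t R1 /\
    fst x = Rplus (fst p) (Rmult t (Rminus (fst q) (fst p))) /\
    snd x = Rplus (snd p) (Rmult t (Rminus (snd q) (snd p))).

Definition in_oseg (p q x : point) : Prop :=
  exists t : R, Rlt R0 t /\ Rlt t R1 /\
    fst x = Rplus (fst p) (Rmult t (Rminus (fst q) (fst p))) /\
    snd x = Rplus (snd p) (Rmult t (Rminus (snd q) (snd p))).

Definition orthogonal (p q p' q' : point) : Prop :=
  Rplus (Rmult (Rminus (fst q) (fst p)) (Rminus (fst q') (fst p')))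
        (Rmult (Rminus (snd q) (snd p)) (Rminus (snd q') (snd p'))) = R0.

Definition origin : point := (R0, R0).

(** A polyline is given by its list of points p_0, ..., p_k (k >= 1);
    its segments are lambda_i = [p_i, p_{i+1}] for i < k. *)
Definition pt (l : seq point) (i : nat) : point := nth origin l i.
Definition nsegs (l : seq point) : nat := (size l).-1.

Definition on_seg (l : seq point) (i : nat) (x : point) : Prop :=
  in_cseg (pt l i) (pt l i.+1) x.
Definition on_oseg (l : seq point) (i : nat) (x : point) : Prop :=
  in_oseg (pt l i) (pt l i.+1) x.

(* Well-formed polyline: nondegenerate segments, consecutive segments
   share exactly one endpoint and form an angle different from 180 degrees,
   non-consecutive segments are disjoint. *)
Definition polyline_ok (l : seq point) : Prop :=
  (1 < size l)%N /\
  (forall i, (i < nsegs l)%N -> pt l i <> pt l i.+1) /\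
  (forall i, (i.+1 < nsegs l)%N ->
     (forall x, on_seg l i x -> on_seg l i.+1 x -> x = pt l i.+1) /\
     ~ in_oseg (pt l i) (pt l i.+2) (pt l i.+1)) /\
  (forall i j, (i.+1 < j)%N -> (j < nsegs l)%N ->
     forall x, ~ (on_seg l i x /\ on_seg l j x)).

Definition on_curve (l : seq point) (x : point) : Prop :=
  exists i, (i < nsegs l)%N /\ on_seg l i x.

Definition on_rel_interior (l : seq point) (x : point) : Prop :=
  on_curve l x /\ x <> pt l 0 /\ x <> pt l (nsegs l).

Definition simple_graph (T : finType) (Vs : {set T}) (E : {set {set T}}) : Prop :=
  forall e, e \in E -> #|e| = 2 /\ e \subset Vs.

Definition del_vertex_V (T : finType) (Vs : {set T}) (v : T) : {set T} := Vs :\ v.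
Definition del_vertex_E (T : finType) (E : {set {set T}}) (v : T) : {set {set T}} :=
  [set e in E | v \notin e].

Definition degree (T : finType) (E : {set {set T}}) (v : T) : nat :=
  #|[set e in E | v \in e]|.

(* A drawing is given by vertex positions and, for every ordered pair (u,w)
   with {u,w} an edge, the list of bends of the edge traversed from u to w. *)
Record pdrawing (T : finType) := PDrawing {
  pos : T -> point;
  bends : T -> T -> seq point
}.

Definition edge_pts (T : finType) (D : pdrawing T) (u w : T) : seq point :=
  pos D u :: rcons (bends D u w) (pos D w).

Definition is_edge (T : finType) (E : {set {set T}}) (u w : T) : bool :=
  [set u; w] \in E.

Definition polyline_drawing (T : finType) (Vs : {set T}) (E : {set {set T}})
    (D : pdrawing T) : Prop :=
  (forall u w, u \in Vs -> w \in Vs -> pos D u = pos D w -> u = w) /\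
  (forall u w, is_edge E u w -> bends D w u = rev (bends D u w)) /\
  (forall u w, is_edge E u w -> polyline_ok (edge_pts D u w)) /\
  (forall u w z, is_edge E u w -> z \in Vs -> z != u -> z != w ->
      ~ on_curve (edge_pts D u w) (pos D z)) /\
  (* finitely many crossings *)
  (exists L : list point, forall u w u' w',
      is_edge E u w -> is_edge E u' w' -> [set u; w] != [set u'; w'] ->
      forall x, on_rel_interior (edge_pts D u w) x ->
                on_rel_interior (edge_pts D u' w') x -> List.In x L).

Definition all_crossings_RAC (T : finType) (E : {set {set T}}) (D : pdrawing T) : Prop :=
  forall u w u' w',
    is_edge E u w -> is_edge E u' w' -> [set u; w] != [set u'; w'] ->
    forall x, on_rel_interior (edge_pts D u w) x ->
              on_rel_interior (edge_pts D u' w') x ->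
    exists i j,
      (i < nsegs (edge_pts D u w))%N /\ (j < nsegs (edge_pts D u' w'))%N /\
      on_oseg (edge_pts D u w) i x /\ on_oseg (edge_pts D u' w') j x /\
      orthogonal (pt (edge_pts D u w) i) (pt (edge_pts D u w) i.+1)
                 (pt (edge_pts D u' w') j) (pt (edge_pts D u' w') j.+1).

(* total number of bends: every edge {u,w} is counted twice (as (u,w) and (w,u)) *)
Definition twice_total_bends (T : finType) (Vs : {set T}) (E : {set {set T}})
    (D : pdrawing T) : nat :=
  \sum_(u in Vs) \sum_(w in Vs | is_edge E u w) size (bends D u w).

Definition bRAC_drawing (T : finType) (Vs : {set T}) (E : {set {set T}})
    (b : nat) (beta : {set T} -> nat) (D : pdrawing T) : Prop :=
  polyline_drawing Vs E D /\
  all_crossings_RAC E D /\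
  (twice_total_bends Vs E D <= 2 * b)%N /\
  (forall u w, is_edge E u w -> (size (bends D u w) <= beta [set u; w])%N).

Definition admits_bRAC (T : finType) (Vs : {set T}) (E : {set {set T}})
    (b : nat) (beta : {set T} -> nat) : Prop :=
  exists D : pdrawing T, bRAC_drawing Vs E b beta D.

From Pilot Require Import Defs.
From Stdlib Require Import Reals List Lra Classical.
From mathcomp Require Import all_boot.

(* Deleting a leaf from a b-bend beta-restricted RAC drawing leaves such a
   drawing of the smaller graph.  Conversely, given a drawing of G - v, let c be
   the position of the neighbour u of v and choose a slope parallel to no
   segment of the drawing.  The ray from c with that slope meets every segment
   in at most one point, so a short enough initial piece [c, p] of it touches
   the drawing only at c.  Placing v at p and drawing uv as the straight
   segment [c, p] adds no crossing and no bend. *)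

Set Implicit Arguments.
Unset Strict Implicit.
Unset Printing Implicit Defensive.

Section SmallPositive.
Local Open Scope R_scope.

Definition for_small_pos (P : R -> Prop) : Prop :=
  exists e, 0 < e /\ forall t, 0 < t <= e -> P t.

Lemma for_small_pos_and (P Q : R -> Prop) :
  for_small_pos P -> for_small_pos Q -> for_small_pos (fun t => P t /\ Q t).
Proof.
move=> [e [e_pos HP]] [e' [e'_pos HQ]].
exists (Rmin e e'); split; first exact: Rmin_glb_lt.
move=> t ht; have := Rmin_l e e'; have := Rmin_r e e'.
by split; [apply: HP | apply: HQ]; lra.
Qed.

Lemma for_small_pos_forall (I : finType) (Q : I -> R -> Prop) :
  (forall i, for_small_pos (Q i)) -> for_small_pos (fun t => forall i, Q i t).
Proof.
move=> HQ.
suff [e [e_pos He]] : for_small_pos (fun t => forall i, i \in enum I -> Q i t).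
  by exists e; split=> // t ht i; apply: He; rewrite ?mem_enum.
elim: (enum I) => [|j s IHs].
  by exists 1; split=> [|t _ i]; [lra | rewrite in_nil].
have [e [e_pos He]] := for_small_pos_and (HQ j) IHs.
exists e; split=> // t ht i; rewrite in_cons => /orP [/eqP -> | i_s].
  by case: (He t ht).
by case: (He t ht) => _; apply.
Qed.

Lemma for_small_pos_forall_ltn (n : nat) (Q : nat -> R -> Prop) :
  (forall k, (k < n)%N -> for_small_pos (Q k)) ->
  for_small_pos (fun t => forall k, (k < n)%N -> Q k t).
Proof.
move=> HQ; have [e [e_pos He]] := @for_small_pos_forall _ (fun i : 'I_n => Q i)
  (fun i => HQ i (ltn_ord i)).
by exists e; split=> // t ht k kn; apply: (He t ht (Ordinal kn)).
Qed.

End SmallPositive.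

Section Rays.
Local Open Scope R_scope.

Definition ray (c : point) (s t : R) : point := (fst c + t, snd c + t * s).

Definition nonparallel (a b : point) (s : R) : Prop :=
  (fst b - fst a = 0 /\ snd b - snd a = 0) \/ snd b - snd a <> s * (fst b - fst a).

Lemma for_small_pos_nonparallel (a b : point) : for_small_pos (nonparallel a b).
Proof.
rewrite /nonparallel; set w1 := fst b - fst a; set w2 := snd b - snd a.
have [w1_0 | w1_neq0] := Req_dec w1 0.
  exists 1; split=> [|s _]; first lra.
  by have [w2_0 | w2_neq0] := Req_dec w2 0; [left | right; rewrite w1_0; lra].
pose r := w2 / w1.
have nonpar_of_ne s : s <> r -> nonparallel a b s.
  move=> s_r; right => Hw2; apply: s_r; rewrite /r /w2 Hw2 /w1; field; exact: w1_neq0.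
have [r_le0 | r_pos] := Rle_lt_dec r 0.
  by exists 1; split=> [|s hs]; [lra | apply: nonpar_of_ne; lra].
by exists (r / 2); split=> [|s hs]; [lra | apply: nonpar_of_ne; lra].
Qed.

Lemma ray_meets_segment_once (a b c : point) (s t1 t2 : R) :
  nonparallel a b s -> in_cseg a b (ray c s t1) -> in_cseg a b (ray c s t2) ->
  t1 = t2.
Proof.
rewrite /nonparallel /ray => nonpar [r1 [_ [_ [/= X1 Y1]]]] [r2 [_ [_ [/= X2 Y2]]]].
have DX : t1 - t2 = (r1 - r2) * (fst b - fst a) by lra.
have DY : (t1 - t2) * s = (r1 - r2) * (snd b - snd a) by lra.
case: nonpar => [[W1 _] | nonpar]; first by rewrite W1 in DX; lra.
have : (r1 - r2) * ((snd b - snd a) - s * (fst b - fst a)) = 0.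
  by rewrite Rmult_minus_distr_l -DY; nra.
case/Rmult_integral => [r12 | W]; last by lra.
by rewrite r12 Rmult_0_l in DX; lra.
Qed.

Lemma for_small_pos_ray_avoids (a b c : point) (s : R) :
  nonparallel a b s -> for_small_pos (fun t => ~ in_cseg a b (ray c s t)).
Proof.
move=> nonpar.
have [[t0 [t0_pos hit0]] | no_hit] :=
  classic (exists t0, 0 < t0 /\ in_cseg a b (ray c s t0)).
  exists (t0 / 2); split=> [|t ht hit]; first lra.
  by have := ray_meets_segment_once nonpar hit hit0; lra.
exists 1; split=> [|t ht hit]; first lra.
by apply: no_hit; exists t; split=> //; lra.
Qed.

Lemma in_cseg_left (a b : point) : in_cseg a b a.
Proof. by exists 0; split; [lra | split; [lra | split; ring]]. Qed.

Lemma in_cseg_sym (a b q : point) : in_cseg a b q -> in_cseg b a q.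
Proof.
move=> [r [r0 [r1 [X Y]]]]; exists (1 - r).
by split; [lra | split; [lra | split; [rewrite X | rewrite Y]; ring]].
Qed.

Lemma in_cseg_ray (c q : point) (s tau : R) : 0 < tau ->
  in_cseg c (ray c s tau) q -> q = c \/ exists2 t, 0 < t <= tau & q = ray c s t.
Proof.
case: q c => q1 q2 [c1 c2] tau_pos [r [r0 [r1 [/= X Y]]]].
have [r_eq0 | r_neq0] := Req_dec r 0; first by left; rewrite r_eq0 in X Y; f_equal; lra.
right; exists (r * tau); first by split; nra.
by rewrite /ray /=; f_equal; [lra | rewrite Y; ring].
Qed.

End Rays.

Lemma polyline_ok_seg (a b : point) : a <> b -> polyline_ok [:: a; b].
Proof.
move=> ab; split=> //; split; first by case.
by split; case=> [|i] // [|[|j]].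
Qed.

Lemma on_curve_seg (a b q : point) : on_curve [:: a; b] q -> in_cseg a b q.
Proof. by case=> [[|i]] []. Qed.

Lemma on_rel_interior_seg (a b q : point) :
  on_rel_interior [:: a; b] q -> [/\ in_cseg a b q, q <> a & q <> b].
Proof. by case=> /on_curve_seg q_ab [qa qb]. Qed.

Section ClearSegment.
Local Open Scope R_scope.

Definition clear_segment (T : finType) (D : pdrawing T) (c p : point) : Prop :=
  forall q, in_cseg c p q -> q <> c ->
    (forall z, q <> Defs.pos D z) /\ (forall x y, ~ on_curve (edge_pts D x y) q).

Lemma exists_clear_segment (T : finType) (D : pdrawing T) (c : point) :
  exists2 p, c <> p & clear_segment D c p.
Proof.
pose seg xy k := (pt (edge_pts D xy.1 xy.2) k, pt (edge_pts D xy.1 xy.2) k.+1).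
pose nseg (xy : T * T) := nsegs (edge_pts D xy.1 xy.2).
have [s [s_pos nonpar]] : for_small_pos (fun s => forall xy k, (k < nseg xy)%N ->
    nonparallel (seg xy k).1 (seg xy k).2 s).
  apply: for_small_pos_forall => xy; apply: for_small_pos_forall_ltn => k _.
  exact: for_small_pos_nonparallel.
have [tau [tau_pos avoid]] : for_small_pos (fun t =>
    (forall xy k, (k < nseg xy)%N -> ~ in_cseg (seg xy k).1 (seg xy k).2 (ray c s t)) /\
    (forall z, ~ in_cseg (Defs.pos D z) (Defs.pos D z) (ray c s t))).
  apply: for_small_pos_and; last first.
    by apply: for_small_pos_forall => z; apply: for_small_pos_ray_avoids; left; lra.
  apply: for_small_pos_forall => xy; apply: for_small_pos_forall_ltn => k k_lt.
  by apply: for_small_pos_ray_avoids; apply: nonpar k_lt; lra.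
exists (ray c s tau); first by move=> /(f_equal fst) /=; lra.
move=> q /(in_cseg_ray tau_pos) [// | [t t_le ->]] _.
have [off_edges off_vertices] := avoid t t_le.
split=> [z q_z | x y [k [k_lt q_k]]].
  by apply: (off_vertices z); rewrite -q_z; apply: in_cseg_left.
exact: (off_edges (x, y) k k_lt q_k).
Qed.

End ClearSegment.

Section Graphs.
Variable T : finType.
Implicit Types (Vs : {set T}) (E : {set {set T}}) (v u x y : T).

Lemma is_edgeC E x y : is_edge E x y = is_edge E y x.
Proof. by rewrite /is_edge setUC. Qed.

Lemma is_edge_del_vertex E v x y :
  x != v -> y != v -> is_edge (del_vertex_E E v) x y = is_edge E x y.
Proof.
move=> xv yv; rewrite /is_edge /del_vertex_E !inE.
by rewrite (eq_sym v x) (eq_sym v y) (negbTE xv) (negbTE yv) andbT.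
Qed.

Lemma in_del_vertex_V Vs v x : x \in Vs -> x != v -> x \in del_vertex_V Vs v.
Proof. by move=> x_Vs xv; rewrite !inE xv. Qed.

Lemma degree1_neighbor Vs E v :
  simple_graph Vs E -> degree E v = 1 ->
  exists u, [/\ u \in Vs, u != v & forall y, is_edge E v y -> y = u].
Proof.
move=> simpleG /eqP /cards1P [e0 edges_v].
have /andP [e0E ve0] : (e0 \in E) && (v \in e0).
  by rewrite -(in_set (fun e => (e \in E) && (v \in e))) edges_v set11.
have [card_e0 /subsetP e0_Vs] := simpleG e0 e0E.
have /cards1P [u e0_v] : #|e0 :\ v| == 1.
  by move: card_e0; rewrite (cardsD1 v e0) ve0 add1n => -[->].
have other_e0 y : y \in e0 :\ v -> y = u by rewrite e0_v => /set1P.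
have /setD1P [uv u_e0] : u \in e0 :\ v.
  by rewrite e0_v set11.
exists u; split=> // [|y vyE]; first exact: e0_Vs.
have vy_e0 : [set v; y] = e0.
  by apply/set1P; rewrite -edges_v inE set21 andbT.
have [card_vy _] := simpleG _ vyE.
apply: other_e0; rewrite -vy_e0 !inE eqxx orbT andbT.
by move: card_vy; rewrite cards2 eq_sym; case: (y == v).
Qed.

Lemma is_edge_leaf_cases E v u x y :
  (forall y, is_edge E v y -> y = u) -> is_edge E x y ->
  [/\ x != v, y != v & is_edge (del_vertex_E E v) x y] \/
  (x = u /\ y = v \/ x = v /\ y = u).
Proof.
move=> leaf xyE; have [xv | xv] := eqVneq x v.
  by right; right; split=> //; apply: leaf; rewrite -xv.
have [yv | yv] := eqVneq y v.
  by right; left; split=> //; apply: leaf; rewrite -yv is_edgeC.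
by left; rewrite is_edge_del_vertex.
Qed.

End Graphs.

Section Restriction.
Variables (T : finType) (Vs Vs' : {set T}) (E E' : {set {set T}}).
Hypotheses (sub_Vs : Vs' \subset Vs) (sub_E : E' \subset E).

Lemma is_edge_sub x y : is_edge E' x y -> is_edge E x y.
Proof. exact: (subsetP sub_E). Qed.

Lemma twice_total_bends_sub (D : pdrawing T) :
  (twice_total_bends Vs' E' D <= twice_total_bends Vs E D)%N.
Proof.
have sVs := subsetP sub_Vs.
have le_sum_sub := sub_le_big leqnn (fun m n => leq_addr n m).
apply: (@leq_trans (\sum_(x in Vs') \sum_(y in Vs | is_edge E x y) size (bends D x y))).
  apply: leq_sum => x _; apply: le_sum_sub => y /andP [y_Vs' xyE'].
  by rewrite sVs ?is_edge_sub.
exact: le_sum_sub.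
Qed.

Lemma bRAC_drawing_sub (b : nat) (beta : {set T} -> nat) (D : pdrawing T) :
  bRAC_drawing Vs E b beta D -> bRAC_drawing Vs' E' b beta D.
Proof.
have sVs := subsetP sub_Vs.
move=> [[inj [sym [poly [avoid [L crossings]]]]] [rac [total local]]].
split; [split; [|split; [|split; [|split]]] | split; [|split]].
- by move=> x y /sVs x_Vs /sVs y_Vs; apply: inj.
- by move=> x y /is_edge_sub; apply: sym.
- by move=> x y /is_edge_sub; apply: poly.
- by move=> x y z /is_edge_sub xyE /sVs; apply: avoid.
- by exists L => x y x' y' /is_edge_sub xyE /is_edge_sub; apply: crossings.
- by move=> x y x' y' /is_edge_sub xyE /is_edge_sub; apply: rac.
- exact: leq_trans (twice_total_bends_sub D) total.
- by move=> x y /is_edge_sub; apply: local.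
Qed.

End Restriction.

Definition place_leaf (T : finType) (D : pdrawing T) (v : T) (p : point) :=
  PDrawing (fun z => if z == v then p else Defs.pos D z)
           (fun x y => if (x == v) || (y == v) then [::] else bends D x y).

Section PlaceLeaf.
Variables (T : finType) (D : pdrawing T) (v : T) (p : point).
Local Notation D' := (place_leaf D v p).

Lemma edge_pts_place_leaf x y :
  x != v -> y != v -> edge_pts D' x y = edge_pts D x y.
Proof. by move=> xv yv; rewrite /edge_pts /= (negbTE xv) (negbTE yv). Qed.

Lemma edge_pts_place_leaf_to x : x != v -> edge_pts D' x v = [:: Defs.pos D x; p].
Proof. by move=> xv; rewrite /edge_pts /= eqxx orbT (negbTE xv). Qed.

Lemma edge_pts_place_leaf_from y : y != v -> edge_pts D' v y = [:: p; Defs.pos D y].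
Proof. by move=> yv; rewrite /edge_pts /= eqxx (negbTE yv). Qed.

Lemma twice_total_bends_place_leaf (Vs : {set T}) (E : {set {set T}}) :
  v \in Vs ->
  twice_total_bends Vs E D' = twice_total_bends (del_vertex_V Vs v) (del_vertex_E E v) D.
Proof.
move=> v_Vs; rewrite /twice_total_bends (big_setD1 v v_Vs) /=.
rewrite big1 ?add0n => [|y _]; last by rewrite /= eqxx.
apply: eq_bigr => x; rewrite !inE => /andP [xv _].
rewrite big_mkcondr (big_setD1 v v_Vs) /= eqxx orbT if_same add0n [RHS]big_mkcondr.
apply: eq_bigr => y; rewrite !inE => /andP [yv _].
by rewrite is_edge_del_vertex // (negbTE xv) (negbTE yv).
Qed.

End PlaceLeaf.

Section AddLeaf.
Variables (T : finType) (Vs : {set T}) (E : {set {set T}}) (b : nat).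
Variables (beta : {set T} -> nat) (D : pdrawing T) (v u : T) (p : point).
Hypotheses (v_Vs : v \in Vs) (u_Vs : u \in Vs) (uv : u != v).
Hypothesis leaf : forall y, is_edge E v y -> y = u.
Hypothesis drawing : bRAC_drawing (del_vertex_V Vs v) (del_vertex_E E v) b beta D.
Hypotheses (up : Defs.pos D u <> p) (clear : clear_segment D (Defs.pos D u) p).

Local Notation D' := (place_leaf D v p).
Local Notation old_edge x y := [/\ x != v, y != v & is_edge (del_vertex_E E v) x y].
Local Notation new_edge x y := (x = u /\ y = v \/ x = v /\ y = u).

Lemma place_leaf_pos_fresh : (forall z, p <> Defs.pos D z) /\
  (forall x y, ~ on_curve (edge_pts D x y) p).
Proof. by apply: clear; [apply/in_cseg_sym/in_cseg_left | move/esym]. Qed.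

Lemma place_leaf_pos_inj : {in Vs &, injective (Defs.pos D')}.
Proof.
have [[inj _] _] := drawing; have [fresh _] := place_leaf_pos_fresh.
move=> x y x_Vs y_Vs /=.
have [xv | xv] := eqVneq x v; have [yv | yv] := eqVneq y v.
- by rewrite xv yv.
- by move/fresh.
- by move/esym/fresh.
- by apply: inj; apply: in_del_vertex_V.
Qed.

Lemma place_leaf_new_edge_interior x y q : new_edge x y ->
  on_rel_interior (edge_pts D' x y) q -> forall x' y', ~ on_curve (edge_pts D x' y') q.
Proof.
case=> [[-> ->] | [-> ->]].
  rewrite edge_pts_place_leaf_to // => /on_rel_interior_seg [q_in qc _].
  exact: (clear q_in qc).2.
rewrite edge_pts_place_leaf_from // => /on_rel_interior_seg [/in_cseg_sym q_in _ qc].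
exact: (clear q_in qc).2.
Qed.

Lemma place_leaf_new_edge_avoids z : z \in Vs -> z != u -> z != v ->
  ~ in_cseg (Defs.pos D u) p (Defs.pos D z).
Proof.
have [[inj _] _] := drawing; move=> z_Vs zu zv z_in.
have [zu_pos | zu_pos] := classic (Defs.pos D z = Defs.pos D u).
  by move/eqP: zu; apply; apply: inj zu_pos; apply: in_del_vertex_V.
exact: (clear z_in zu_pos).1 z erefl.
Qed.

Lemma place_leaf_crossing x y x' y' q : is_edge E x y -> is_edge E x' y' ->
  [set x; y] != [set x'; y'] ->
  on_rel_interior (edge_pts D' x y) q -> on_rel_interior (edge_pts D' x' y') q ->
  old_edge x y /\ old_edge x' y'.
Proof.
move=> xyE x'y'E ne q_xy q_x'y'.
have new_set s t : new_edge s t -> [set s; t] = [set u; v].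
  by case=> [[-> ->] | [-> ->]]; last exact: setUC.
have old_curve s t : old_edge s t -> on_rel_interior (edge_pts D' s t) q ->
    on_curve (edge_pts D s t) q.
  by move=> [sv tv _]; rewrite edge_pts_place_leaf // => -[].
case: (is_edge_leaf_cases leaf xyE) => [old | new];
  case: (is_edge_leaf_cases leaf x'y'E) => [old' | new'].
- by [].
- by case: (place_leaf_new_edge_interior new' q_x'y' (old_curve _ _ old q_xy)).
- by case: (place_leaf_new_edge_interior new q_xy (old_curve _ _ old' q_x'y')).
- by rewrite (new_set _ _ new) (new_set _ _ new') eqxx in ne.
Qed.

Lemma place_leaf_polyline_drawing : polyline_drawing Vs E D'.
Proof.
have [[_ [sym [poly [avoid [L crossings]]]]] _] := drawing.
have [_ fresh_edges] := place_leaf_pos_fresh.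
split; [exact: place_leaf_pos_inj | split; [|split; [|split]]].
- move=> x y /(is_edge_leaf_cases leaf) [[xv yv xyE] | [[-> ->] | [-> ->]]] /=.
  + by rewrite (negbTE xv) (negbTE yv); apply: sym.
  + by rewrite eqxx ?orbT.
  + by rewrite eqxx ?orbT.
- move=> x y /(is_edge_leaf_cases leaf) [[xv yv xyE] | [[-> ->] | [-> ->]]].
  + by rewrite edge_pts_place_leaf //; apply: poly.
  + by rewrite edge_pts_place_leaf_to //; apply: polyline_ok_seg.
  + by rewrite edge_pts_place_leaf_from //; apply: polyline_ok_seg => /esym.
- move=> x y z /(is_edge_leaf_cases leaf) [[xv yv xyE] | [[-> ->] | [-> ->]]] z_Vs zx zy.
  + rewrite edge_pts_place_leaf // /=.
    have [_ | zv] := eqVneq z v; first exact: fresh_edges.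
    by apply: avoid => //; apply: in_del_vertex_V.
  + rewrite edge_pts_place_leaf_to // /= (negbTE zy) => /on_curve_seg.
    exact: place_leaf_new_edge_avoids.
  + rewrite edge_pts_place_leaf_from // /= (negbTE zx) => /on_curve_seg /in_cseg_sym.
    exact: place_leaf_new_edge_avoids.
- exists L => x y x' y' xyE x'y'E ne q q_xy q_x'y'.
  have [[xv yv xyE'] [x'v y'v x'y'E']] := place_leaf_crossing xyE x'y'E ne q_xy q_x'y'.
  rewrite !edge_pts_place_leaf // in q_xy q_x'y'.
  exact: crossings ne q q_xy q_x'y'.
Qed.

Lemma place_leaf_all_crossings_RAC : all_crossings_RAC E D'.
Proof.
have [_ [rac _]] := drawing.
move=> x y x' y' xyE x'y'E ne q q_xy q_x'y'.
have [[xv yv xyE'] [x'v y'v x'y'E']] := place_leaf_crossing xyE x'y'E ne q_xy q_x'y'.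
rewrite !edge_pts_place_leaf // in q_xy q_x'y' *.
exact: rac ne q q_xy q_x'y'.
Qed.

Lemma bRAC_drawing_place_leaf : bRAC_drawing Vs E b beta D'.
Proof.
have [_ [_ [total local]]] := drawing.
split; first exact: place_leaf_polyline_drawing.
split; first exact: place_leaf_all_crossings_RAC.
split; first by rewrite twice_total_bends_place_leaf.
move=> x y /(is_edge_leaf_cases leaf) [[xv yv xyE] | [[-> ->] | [-> ->]]] /=.
- by rewrite (negbTE xv) (negbTE yv); apply: local.
- by rewrite eqxx ?orbT.
- by rewrite eqxx ?orbT.
Qed.

End AddLeaf.

Theorem mainTheorem2 (T : finType) (Vs : {set T}) (E : {set {set T}})
    (b : nat) (beta : {set T} -> nat) (v : T) :
  simple_graph Vs E ->
  (forall e, e \in E -> (beta e <= 3)%N) ->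
  v \in Vs ->
  degree E v = 1%N ->
  admits_bRAC (del_vertex_V Vs v) (del_vertex_E E v) b beta <->
  admits_bRAC Vs E b beta.
Proof.
move=> simpleG _ v_Vs deg_v.
have [u [u_Vs uv leaf]] := degree1_neighbor simpleG deg_v.
split=> -[D drawing].
- have [p up clear] := exists_clear_segment D (Defs.pos D u).
  exists (place_leaf D v p).
  exact: (bRAC_drawing_place_leaf v_Vs u_Vs uv leaf drawing up clear).
- exists D; apply: bRAC_drawing_sub drawing; first exact: subsetDl.
  by apply/subsetP => e; rewrite inE => /andP [].
Qed.
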